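(* For all integers $r\ge 2$ and $n\ge r$, $$\mathrm{exa}_1(n,K_r)=\binom{r}{2}+(r-2)(n-r)+\mathrm{ex}(n-r,K_r).$$
   Context: For a graph $H$ and a graph $F$, $\mathcal N(H,F)$ denotes the number of subgraphs of $H$ isomorphic to $F$. For a nonnegative integer $k$, $\mathrm{exa}_k(n,F)$ is the largest number of edges of a simple graph $H$ on $n$ vertices with $\mathcal N(H,F)=k$. $\mathrm{ex}(m,F)$ is the Turán number: the largest number of edges of a simple graph on $m$ vertices containing no subgraph isomorphic to $F$ (with $\mathrm{ex}(0,F)=0$). $K_r$ is the complete graph on $r$ vertices. *)

(* Simple graphs on a finite vertex type T are represented
   by their edge set E : {set {set T}}, every edge being a 2-element set. *)
From mathcomp Require Import all_boot all_order.
Set Implicit Arguments. Unset Strict Implicit. Unset Printing Implicit Defensive.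

Definition simple_graph (T : finType) (E : {set {set T}}) : bool :=
  [forall e in E, #|e| == 2].

Definition is_subgraph (T : finType) (E : {set {set T}})
    (p : {set T} * {set {set T}}) : bool :=
  (p.2 \subset E) && [forall e in p.2, e \subset p.1].

Definition iso_to (U T : finType) (EF : {set {set U}})
    (p : {set T} * {set {set T}}) : bool :=
  [exists f : {ffun U -> T},
     [&& injectiveb f, p.1 == f @: [set: U] & p.2 == [set f @: e | e : {set U} in EF]]].

Definition Ncount (T U : finType) (E : {set {set T}}) (EF : {set {set U}}) : nat :=
  #|[set p : {set T} * {set {set T}} | is_subgraph E p && iso_to EF p]|.

Definition Kr (r : nat) : {set {set 'I_r}} := [set e : {set 'I_r} | #|e| == 2].

Definition exa (k n : nat) (U : finType) (EF : {set {set U}}) : nat :=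
  \max_(E : {set {set 'I_n}} | simple_graph E && (Ncount E EF == k)) #|E|.

Definition ex (m : nat) (U : finType) (EF : {set {set U}}) : nat :=
  \max_(E : {set {set 'I_m}} | simple_graph E && (Ncount E EF == 0)) #|E|.

(* Upper bound: if A is the only copy of K_r in a graph, there are at most
   C(r,2) edges inside A; an outside vertex has at most r-2 neighbours in A,
   since r-1 of them would span a second K_r with it; and the graph outside A
   is K_r-free, so has at most ex(n-r, K_r) edges.
   Lower bound: by Erdos' degree majorization, an extremal K_r-free graph on
   n-r vertices has no more edges than some complete (r-1)-partite graph.
   Glue that graph to a K_r whose vertices carry the colours 0, ..., r-1,
   joining each outer vertex to the core vertices of the other colours except
   r-1. Edges join distinct colours, so every K_r uses all r colours; it thus
   contains the core vertex of colour r-1, whose neighbours all lie in the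
   core, and the core is the only K_r. *)

From mathcomp Require Import all_boot all_order.
Set Implicit Arguments. Unset Strict Implicit. Unset Printing Implicit Defensive.

Section Cliques.
Variable T : finType.
Implicit Types (g : rel T) (E : {set {set T}}) (A S : {set T}).

Definition edge_rel E : rel T := fun x y => (x != y) && ([set x; y] \in E).

Definition edge_set g : {set {set T}} :=
  [set [set p.1; p.2] | p in [set p : T * T | g p.1 p.2]].

Definition clique g S := [forall x in S, forall y in S, (x != y) ==> g x y].

Definition cliques k g := [set S : {set T} | (#|S| == k) && clique g S].

Definition pairs_of A := [set e : {set T} | e \subset A & #|e| == 2].

Definition induced E A := [set e in E | e \subset A].

Definition crossing E A := [set e in E | ~~ (e \subset A) && ~~ (e \subset ~: A)].

Lemma cliqueP g S : reflect {in S &, forall x y, x != y -> g x y} (clique g S).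
Proof.
apply: (iffP forall_inP) => [gS x y xS yS | gS x xS].
  by move/forall_inP: (gS x xS) => /(_ y yS) /implyP.
by apply/forall_inP => y yS; apply/implyP; apply: gS.
Qed.

Lemma clique_setU1 g x S : symmetric g ->
  clique g S -> {in S, forall y, g x y} -> clique g (x |: S).
Proof.
move=> gsym /cliqueP gS gx; apply/cliqueP => y z.
case/setU1P=> [->|yS] /setU1P[->|zS]; rewrite ?eqxx // => yz.
- exact: gx.
- by rewrite gsym; apply: gx.
- exact: gS.
Qed.

Lemma subset_of_card A k : k <= #|A| -> exists2 B : {set T}, B \subset A & #|B| = k.
Proof.
case/card_geqP => s [s_uniq <- sA]; exists [set x in s]; last by rewrite cardsE; apply/card_uniqP.
by apply/subsetP => x; rewrite inE => /sA.
Qed.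

Lemma set2_inv (a b c d : T) :
  [set a; b] = [set c; d] -> (a = c /\ b = d) \/ (a = d /\ b = c).
Proof.
move=> eq_ab_cd.
have /set2P ac : a \in [set c; d] by rewrite -eq_ab_cd set21.
have /set2P bd : b \in [set c; d] by rewrite -eq_ab_cd set22.
have /set2P db : d \in [set a; b] by rewrite eq_ab_cd set22.
have /set2P ca : c \in [set a; b] by rewrite eq_ab_cd set21.
by case: ac bd db ca => ? [] ? [] ? [] ?; subst; auto.
Qed.

Lemma edge_rel_sym E : symmetric (edge_rel E).
Proof. by move=> x y; rewrite /edge_rel eq_sym setUC. Qed.

Lemma edge_rel_irr E : irreflexive (edge_rel E).
Proof. by move=> x; rewrite /edge_rel eqxx. Qed.

Lemma mem_edge_set g x y : g x y -> [set x; y] \in edge_set g.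
Proof. by move=> gxy; apply/imsetP; exists (x, y); rewrite ?inE. Qed.

Lemma edge_relK E : simple_graph E -> edge_set (edge_rel E) = E.
Proof.
move=> /forall_inP Esimple; apply/setP => e; apply/imsetP/idP => [[p] | eE].
  by rewrite inE => /andP[_ pE] ->.
have /cards2P[x [y [xy exy]]] := Esimple e eE.
by exists (x, y); rewrite // inE /edge_rel xy -exy.
Qed.

Lemma simple_edge_set g : irreflexive g -> simple_graph (edge_set g).
Proof.
move=> girr; apply/forall_inP => _ /imsetP[[x y] gxy ->]; rewrite inE /= in gxy.
by rewrite cards2; case: (eqVneq x y) gxy => [->|]; rewrite ?girr.
Qed.

Lemma card_rel_pairs g : #|[set p : T * T | g p.1 p.2]| = \sum_x #|[set y | g x y]|.
Proof.
rewrite -sum1_card (eq_bigl (fun p : T * T => g p.1 p.2)) => [|p]; last by rewrite inE.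
rewrite -(pair_big_dep xpredT g (fun _ _ => 1)).
by apply: eq_bigr => x _; rewrite -sum1_card; apply: eq_bigl => y; rewrite inE.
Qed.

Lemma card_edge_set_le g : #|edge_set g| <= \sum_x #|[set y | g x y]|.
Proof. by rewrite -card_rel_pairs leq_imset_card. Qed.

Section SymmetricRelation.
Variable g : rel T.
Hypotheses (gsym : symmetric g) (girr : irreflexive g).

Lemma edge_setK : edge_rel (edge_set g) =2 g.
Proof.
move=> x y; apply/andP/idP => [[_ /imsetP[[a b]]] | gxy].
  by rewrite inE /= => gab /set2_inv[[-> ->]|[-> ->]]; rewrite // gsym.
by split; [apply: contraTneq gxy => ->; rewrite girr | apply: mem_edge_set].
Qed.

Lemma cliques_edge_set k : cliques k (edge_rel (edge_set g)) = cliques k g.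
Proof.
apply/setP => S; rewrite !inE; congr (_ && _).
by apply/cliqueP/cliqueP => Scl x y xS yS xy; move: (Scl x y xS yS xy); rewrite edge_setK.
Qed.

Lemma card_edge_set : 2 * #|edge_set g| = \sum_x #|[set y | g x y]|.
Proof.
rewrite -card_rel_pairs -(sum1_card (mem [set p : T * T | g p.1 p.2])).
rewrite (partition_big_imset (fun p : T * T => [set p.1; p.2])).
rewrite mulnC -sum_nat_const.
apply: eq_bigr => _ /imsetP[[x y] gxy ->]; rewrite inE /= in gxy.
have xy : x != y by apply: contraTneq gxy => ->; rewrite girr.
rewrite (eq_bigl (mem [set (x, y); (y, x)])) => [|[a b]].
  by rewrite sum1_card cards2 xpair_eqE negb_and xy.
rewrite !inE /=; apply/andP/orP => [[_ /eqP/set2_inv[[-> ->]|[-> ->]]] | [] /eqP[-> ->]].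
- by left.
- by right.
- by [].
- by rewrite gsym setUC.
Qed.

Lemma degree_majorization k (V : {set T}) :
    (forall S, S \subset V -> S \notin cliques k.+1 g) ->
  exists c : T -> nat, {in V, forall v, c v < k} /\
    {in V, forall v, #|[set u in V | g v u]| <= #|[set u in V | c u != c v]|}.
Proof.
elim: k V => [|k IHk] V noclique.
  have -> : V = set0.
    apply/setP => v; rewrite inE; apply/negP => vV.
    have := noclique [set v]; rewrite sub1set inE cards1 => /(_ vV) /negP; apply.
    by apply/cliqueP => x y /set1P-> /set1P->; rewrite eqxx.
  by exists (fun=> 0); split => v; rewrite inE.
have [->|[x0 x0V]] := set_0Vmem V; first by exists (fun=> 0); split => v; rewrite inE.
(* Colour the neighbourhood W of a vertex x of maximum degree by induction and
   give the new colour k to the rest of V: a vertex outside W has degree at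
   most #|W|, and every vertex of W has a colour other than k. *)
have [x xV xmax] := @arg_maxnP _ x0 (mem V) (fun v => #|[set u in V | g v u]|) x0V.
pose W := [set u in V | g x u].
have memW u : (u \in W) = (u \in V) && g x u by rewrite inE.
clearbody W.
have WV : W \subset V by apply/subsetP => u; rewrite memW => /andP[].
have noclique_W S : S \subset W -> S \notin cliques k.+1 g.
  move=> SW; apply/negP; rewrite inE => /andP[/eqP cardS Sclique].
  have xS : x \notin S by apply/negP => /(subsetP SW); rewrite memW girr andbF.
  have := noclique (x |: S); rewrite subUset sub1set (xV : x \in V) (subset_trans SW) //.
  rewrite inE cardsU1 xS cardS eqxx => /(_ isT) /negP; apply.
  by apply: clique_setU1 => // y /(subsetP SW); rewrite memW => /andP[].
have [c [c_lt c_deg]] := IHk W noclique_W.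
exists (fun v => if v \in W then c v else k); split => v vV.
  by case: ifP => // vW; apply/ltnW/c_lt.
case: ifP => vW; last first.
  apply: leq_trans (xmax v vV) (subset_leq_card _); apply/subsetP => u.
  rewrite inE => /andP[uV xu]; have uW : u \in W by rewrite memW uV.
  by rewrite inE uV uW (ltn_eqF (c_lt u uW)).
rewrite -(cardsID W [set u in V | g v u]) -(cardsID W [set u in V | _ != c v]).
apply: leq_add.
  apply: leq_trans (leq_trans _ (c_deg v vW)) _; apply: subset_leq_card.
    by apply/subsetP => u; rewrite !inE => /andP[/andP[_ ->] ->].
  by apply/subsetP => u; rewrite !inE => /andP[uW cuv]; rewrite uW cuv (subsetP WV).
apply: subset_leq_card; apply/subsetP => u; rewrite !inE => /andP[uW /andP[uV _]].
by rewrite (negbTE uW) uV eq_sym (ltn_eqF (c_lt v vW)).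
Qed.

End SymmetricRelation.

Lemma turan_coloring g k : symmetric g -> irreflexive g -> cliques k.+2 g = set0 ->
  exists c : T -> 'I_k.+1, #|edge_set g| <= #|edge_set [rel x y | c x != c y]|.
Proof.
move=> gsym girr no_clique.
have [c [c_lt c_deg]] : exists c : T -> nat, {in setT, forall v, c v < k.+1} /\
    {in setT, forall v, #|[set u in setT | g v u]| <= #|[set u in setT | c u != c v]|}.
  by apply: degree_majorization => // S _; rewrite no_clique inE.
exists (fun v => inord (c v)).
have csym : symmetric [rel x y | inord (c x) != inord (c y) :> 'I_k.+1].
  by move=> x y /=; rewrite eq_sym.
have cirr : irreflexive [rel x y | inord (c x) != inord (c y) :> 'I_k.+1].
  by move=> x /=; rewrite eqxx.
rewrite -(leq_pmul2l (isT : 0 < 2)) !card_edge_set //; apply: leq_sum => v _.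
apply: leq_trans (leq_trans _ (c_deg v (in_setT v))) _; apply: subset_leq_card; apply/subsetP => u.
  by rewrite !inE.
by rewrite !inE /= -(inj_eq val_inj) /= !inordK ?c_lt // eq_sym.
Qed.

Lemma card_simple_split E A : simple_graph E ->
  #|E| = #|induced E A| + #|crossing E A| + #|induced E (~: A)|.
Proof.
move=> /forall_inP Esimple.
have not_both e : e \in E -> ~~ ((e \subset A) && (e \subset ~: A)).
  move=> eE; rewrite -subsetI setICr subset0.
  by apply: contraTneq (Esimple e eE) => ->; rewrite cards0.
rewrite -(cardsID [set e : {set T} | e \subset A] E).
rewrite -(cardsID [set e : {set T} | e \subset ~: A] (E :\: _)).
rewrite addnA [RHS]addnAC; congr (_ + _ + _); apply: eq_card => e; rewrite !inE.
- by [].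
- case eE: (e \in E); rewrite ?andbF //= andbT.
  by move: (not_both e eE); case: (e \subset A); case: (e \subset ~: A).
- by case: (e \in E); case: (e \subset A); case: (e \subset ~: A).
Qed.

Lemma card_induced_le E A : simple_graph E -> #|induced E A| <= 'C(#|A|, 2).
Proof.
move=> /forall_inP Esimple; rewrite -cards_draws; apply: subset_leq_card.
by apply/subsetP => e; rewrite !inE => /andP[eE ->]; rewrite Esimple.
Qed.

End Cliques.

Lemma imset_set2 (aT rT : finType) (f : aT -> rT) a b : f @: [set a; b] = [set f a; f b].
Proof. by rewrite imsetU1 imset_set1. Qed.

Lemma imset_preimset (aT rT : finType) (f : aT -> rT) (B : {set rT}) :
  B \subset f @: [set: aT] -> f @: (f @^-1: B) = B.
Proof.
move=> /subsetP Bf; apply/setP => y; apply/imsetP/idP => [[x] | yB].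
  by rewrite inE => fxB ->.
by have /imsetP[x _ yE] := Bf y yB; exists x; rewrite // inE -yE.
Qed.

Lemma imset_pairs_of (aT rT : finType) (f : aT -> rT) : injective f ->
  [set f @: e | e : {set aT} in pairs_of [set: aT]] = pairs_of (f @: [set: aT]).
Proof.
move=> finj; apply/setP => e; rewrite inE; apply/imsetP/andP => [[e'] | [ef /eqP cardE]].
  by rewrite inE => /andP[_ /eqP cardE'] ->; rewrite card_imset // cardE' imsetS ?subsetT.
exists (f @^-1: e); last by rewrite imset_preimset.
by rewrite inE subsetT -(card_imset _ finj) imset_preimset ?cardE.
Qed.

Lemma Kr_pairs_of r : Kr r = pairs_of [set: 'I_r].
Proof. by apply/setP => e; rewrite !inE subsetT. Qed.

Lemma iso_to_Kr (T : finType) r (S : {set T}) (F : {set {set T}}) :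
  iso_to (Kr r) (S, F) = (#|S| == r) && (F == pairs_of S).
Proof.
apply/existsP/andP => [[f /and3P[/injectiveP finj /eqP /= -> /eqP /= ->]] | [/eqP cardS /eqP ->]].
  by rewrite card_imset // cardsT card_ord Kr_pairs_of imset_pairs_of.
pose f := [ffun i : 'I_r => enum_val (cast_ord (esym cardS) i)].
have finj : injective f by move=> i j; rewrite !ffunE => /enum_val_inj /cast_ord_inj.
have fS : f @: [set: 'I_r] = S.
  apply/eqP; rewrite eqEcard card_imset // cardsT card_ord cardS leqnn andbT.
  by apply/subsetP => _ /imsetP[i _ ->]; rewrite ffunE enum_valP.
exists f; rewrite /= fS eqxx Kr_pairs_of imset_pairs_of // fS eqxx !andbT; exact/injectiveP.
Qed.

Lemma is_subgraph_pairs_of (T : finType) (E : {set {set T}}) (S : {set T}) :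
  is_subgraph E (S, pairs_of S) = clique (edge_rel E) S.
Proof.
rewrite /is_subgraph /=.
have -> : [forall e in pairs_of S, e \subset S] by apply/forall_inP => e; rewrite inE => /andP[].
rewrite andbT; apply/subsetP/cliqueP => [sub x y xS yS xy | Scl e].
  by rewrite /edge_rel xy sub // inE cards2 xy subUset !sub1set xS yS.
rewrite inE => /andP[eS /cards2P[x [y [xy exy]]]]; move: eS; rewrite exy subUset !sub1set.
by case/andP => xS yS; case/andP: (Scl x y xS yS xy).
Qed.

Lemma Ncount_Kr (T : finType) (E : {set {set T}}) r :
  Ncount E (Kr r) = #|cliques r (edge_rel E)|.
Proof.
have pair_inj : injective (fun S : {set T} => (S, pairs_of S)) by move=> S1 S2 [].
rewrite /Ncount -(card_imset _ pair_inj); apply: eq_card => -[S F].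
rewrite inE iso_to_Kr; apply/idP/imsetP => [/and3P[subg cardS /eqP eqF] | [S' clS' [-> ->]]].
  by exists S; rewrite ?eqF // inE cardS -is_subgraph_pairs_of -eqF.
by move: clS'; rewrite inE is_subgraph_pairs_of eqxx andbT andbC.
Qed.

Lemma leq_ex m r (F : {set {set 'I_m}}) :
  simple_graph F -> cliques r (edge_rel F) = set0 -> #|F| <= ex m (Kr r).
Proof. by move=> Fsimple Ffree; apply: leq_bigmax_cond; rewrite Fsimple Ncount_Kr Ffree cards0. Qed.

Lemma card_induced_le_ex (T : finType) (E : {set {set T}}) (V : {set T}) r :
    simple_graph E -> (forall S : {set T}, S \subset V -> S \notin cliques r (edge_rel E)) ->
  #|induced E V| <= ex #|V| (Kr r).
Proof.
move=> /forall_inP Esimple noclique.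
pose f : 'I_#|V| -> T := enum_val.
have finj : injective f := @enum_val_inj _ _.
have fV : f @: [set: 'I_#|V|] = V.
  apply/eqP; rewrite eqEcard card_imset // cardsT card_ord leqnn andbT.
  by apply/subsetP => _ /imsetP[i _ ->]; apply: enum_valP.
pose F := [set e : {set 'I_#|V|} | f @: e \in E].
have : induced E V \subset [set f @: e | e : {set _} in F].
  apply/subsetP => e; rewrite inE => /andP[eE eV].
  by apply/imsetP; exists (f @^-1: e); rewrite ?inE imset_preimset ?fV.
move/subset_leq_card/leq_trans; apply; apply: leq_trans (leq_imset_card _ _) (leq_ex _ _).
  by apply/forall_inP => e; rewrite inE => /Esimple; rewrite card_imset.
apply/setP => S; rewrite !inE; apply/negbTE/negP => /andP[/eqP cardS /cliqueP Scl].
have /negP : f @: S \notin cliques r (edge_rel E).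
  by apply: noclique; apply/subsetP => _ /imsetP[i _ ->]; apply: enum_valP.
apply.
rewrite inE card_imset // cardS eqxx; apply/cliqueP => _ _ /imsetP[a aS ->] /imsetP[b bS ->] fab.
have ab : a != b by apply: contraNneq fab => ->.
by have := Scl a b aS bS ab; rewrite /edge_rel fab inE -imset_set2 => /andP[].
Qed.

Lemma ex_witness m k : exists E : {set {set 'I_m}},
  [/\ simple_graph E, cliques k.+2 (edge_rel E) = set0 & #|E| = ex m (Kr k.+2)].
Proof.
pose empty : {set {set 'I_m}} := set0.
have empty_ok : simple_graph empty && (Ncount empty (Kr k.+2) == 0).
  rewrite Ncount_Kr cards_eq0; apply/andP; split; first by apply/forall_inP => e; rewrite inE.
  apply/eqP/setP => S; rewrite !inE; apply/negbTE/negP => /andP[/eqP cardS /cliqueP Scl].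
  have /card_gt1P[x [y [xS yS xy]]] : 1 < #|S| by rewrite cardS.
  by have := Scl x y xS yS xy; rewrite /edge_rel inE andbF.
rewrite /ex (bigmax_eq_arg empty empty_ok); case: arg_maxnP => // E /andP[Esimple].
by rewrite Ncount_Kr cards_eq0 => /eqP Efree _; exists E.
Qed.

Section UniqueClique.
Variables (T : finType) (s : nat) (E : {set {set T}}) (A : {set T}).
Hypotheses (Esimple : simple_graph E) (cliquesE : cliques s.+2 (edge_rel E) = [set A]).

Lemma card_clique : #|A| = s.+2.
Proof. by have := set11 A; rewrite -cliquesE inE => /andP[/eqP]. Qed.

Lemma card_nbhd_in_clique b : b \notin A -> #|[set a in A | edge_rel E b a]| <= s.
Proof.
move=> bA; rewrite leqNgt; apply/negP => /subset_of_card[Y YN cardY].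
have YA : Y \subset A by apply/subsetP => y /(subsetP YN); rewrite inE => /andP[].
have bY : b \notin Y by apply: contra bA; apply: (subsetP YA).
have : b |: Y \in cliques s.+2 (edge_rel E).
  rewrite inE cardsU1 bY cardY eqxx /=; apply: clique_setU1 (edge_rel_sym E) _ _.
    have := set11 A; rewrite -cliquesE inE => /andP[_ /cliqueP Acl].
    by apply/cliqueP => x y /(subsetP YA) xA /(subsetP YA); apply: Acl.
  by move=> y /(subsetP YN); rewrite inE => /andP[].
by rewrite cliquesE => /set1P AbY; move: bA; rewrite -AbY setU11.
Qed.

Lemma card_crossing_le : #|crossing E A| <= s * #|~: A|.
Proof.
pose cross_rel : rel T := fun b a => (b \notin A) && (a \in A) && edge_rel E b a.
have : crossing E A \subset edge_set cross_rel.
  apply/subsetP => e; rewrite inE => /andP[eE /andP[eA eA']].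
  have /cards2P[x [y [xy exy]]] := forall_inP Esimple e eE.
  move: eA eA'; rewrite exy !subUset !sub1set !inE.
  case xA: (x \in A); case yA: (y \in A) => //= _ _.
    by rewrite setUC; apply: mem_edge_set; rewrite /cross_rel yA xA /edge_rel eq_sym xy setUC -exy.
  by apply: mem_edge_set; rewrite /cross_rel xA yA /edge_rel xy -exy.
move/subset_leq_card/leq_trans; apply; apply: leq_trans (card_edge_set_le cross_rel) _.
rewrite mulnC -sum_nat_const [in X in _ <= X]big_mkcond /=; apply: leq_sum => b _; rewrite inE.
case: ifP => bA.
  apply: leq_trans (card_nbhd_in_clique bA); apply: subset_leq_card.
  by apply/subsetP => a; rewrite !inE /cross_rel bA.
by rewrite leqn0 cards_eq0; apply/eqP/setP => a; rewrite !inE /cross_rel bA.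
Qed.

Lemma card_induced_compl_le : #|induced E (~: A)| <= ex #|~: A| (Kr s.+2).
Proof.
apply: card_induced_le_ex => // S SA; rewrite cliquesE; apply/set1P => SE.
have /card_gt0P[a aA] : 0 < #|A| by rewrite card_clique.
by have := subsetP SA a; rewrite SE aA inE aA => /(_ isT).
Qed.

Lemma card_unique_clique_le :
  #|E| <= 'C(s.+2, 2) + s * (#|T| - s.+2) + ex (#|T| - s.+2) (Kr s.+2).
Proof.
have cardC : #|~: A| = #|T| - s.+2 by rewrite -card_clique -(cardsC A) addKn.
rewrite (card_simple_split A Esimple) -cardC.
by rewrite !leq_add ?card_crossing_le ?card_induced_compl_le // -card_clique card_induced_le.
Qed.

End UniqueClique.

Lemma widen_ord_inj {n m} (le_nm : n <= m) : injective (widen_ord le_nm).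
Proof. by move=> i j /(congr1 val) /= /val_inj. Qed.

Section GluedGraph.
Variables (s m : nat) (c : 'I_m -> 'I_s.+1).
Local Notation widen := (widen_ord (leqnSn s.+1)).

(* Vertex i < s.+2 of the core gets colour i, outer vertex j gets colour c j;
   only the core vertex ord_max has colour ord_max. *)
Definition glued_col (x : 'I_(s.+2 + m)) : 'I_s.+2 :=
  match split x with inl i => i | inr j => widen (c j) end.

Definition core : {set 'I_(s.+2 + m)} := [set lshift m i | i : 'I_s.+2].

Definition glued_rel : rel 'I_(s.+2 + m) := fun x y =>
  [&& glued_col x != glued_col y, (glued_col x == ord_max) ==> (y \in core)
    & (glued_col y == ord_max) ==> (x \in core)].

Lemma glued_col_lshift i : glued_col (lshift m i) = i.
Proof. by rewrite /glued_col -[lshift m i]/(unsplit (inl i)) unsplitK. Qed.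

Lemma glued_col_rshift j : glued_col (rshift s.+2 j) = widen (c j).
Proof. by rewrite /glued_col -[rshift s.+2 j]/(unsplit (inr j)) unsplitK. Qed.

Lemma widen_neq_max i : widen i != ord_max.
Proof. by rewrite -val_eqE /= neq_ltn ltn_ord. Qed.

Lemma lshift_in_core i : lshift m i \in core.
Proof. exact: imset_f. Qed.

Lemma rshift_notin_core j : rshift s.+2 j \notin core.
Proof. by apply/imsetP => -[i _ /eqP]; rewrite eq_rlshift. Qed.

Lemma glued_col_max x : glued_col x = ord_max -> x \in core.
Proof.
case: (split_ordP x) => [i -> _ | j ->]; first exact: lshift_in_core.
by rewrite glued_col_rshift => /eqP; rewrite (negbTE (widen_neq_max _)).
Qed.

Lemma card_core : #|core| = s.+2.
Proof. by rewrite card_imset ?cardsT ?card_ord //; apply: lshift_inj. Qed.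

Lemma glued_rel_sym : symmetric glued_rel.
Proof. by move=> x y; rewrite /glued_rel eq_sym; congr (_ && _); apply: andbC. Qed.

Lemma glued_rel_irr : irreflexive glued_rel.
Proof. by move=> x; rewrite /glued_rel eqxx. Qed.

Lemma clique_core : clique glued_rel core.
Proof.
apply/cliqueP => _ _ /imsetP[i _ ->] /imsetP[j _ ->] ij.
by rewrite /glued_rel !glued_col_lshift !lshift_in_core !implybT -(@eq_lshift _ m) ij.
Qed.

Lemma cliques_glued : cliques s.+2 glued_rel = [set core].
Proof.
apply/setP => S; rewrite !inE; apply/andP/eqP => [[/eqP cardS /cliqueP Scl] | ->]; last first.
  by rewrite card_core clique_core.
have col_inj : {in S &, injective glued_col}.
  by move=> x y xS yS; apply: contra_eq => /(Scl x y xS yS) /andP[].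
have [top topS top_max] : exists2 top, top \in S & glued_col top = ord_max.
  have : ord_max \in glued_col @: S.
    suff -> : glued_col @: S = [set: 'I_s.+2] by rewrite inE.
    by apply/eqP; rewrite eqEcard subsetT cardsT card_ord (card_in_imset col_inj) cardS ltnSn.
  by case/imsetP=> x xS ->; exists x.
have SA : S \subset core.
  apply/subsetP => y yS; have [<-|ty] := eqVneq top y; first exact: glued_col_max.
  have /and3P[_ /implyP yA _] := Scl top y topS yS ty.
  by apply: yA; rewrite top_max.
by apply/eqP; rewrite eqEcard SA card_core cardS /=.
Qed.

Local Notation glued := (edge_set glued_rel).

Lemma card_induced_core_ge : 'C(s.+2, 2) <= #|induced glued core|.
Proof.
rewrite -[X in 'C(X, 2)]card_core -cards_draws; apply: subset_leq_card; apply/subsetP => e.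
rewrite !inE => /andP[eA /cards2P[x [y [xy exy]]]]; rewrite eA andbT exy.
move: eA; rewrite exy subUset !sub1set => /andP[xA yA].
by apply: mem_edge_set; move/cliqueP: clique_core; apply.
Qed.

Lemma card_crossing_core_ge : s * m <= #|crossing glued core|.
Proof.
(* lift (c j) enumerates the s colours of the core neighbours of outer vertex j. *)
pose cross (p : 'I_m * 'I_s) := [set rshift s.+2 p.1; lshift m (widen (lift (c p.1) p.2))].
have cross_inj : injective cross.
  move=> [j k] [j' k'] /set2_inv[[/rshift_inj /= <-] | [/eqP]]; last by rewrite eq_rlshift.
  by move=> /lshift_inj /widen_ord_inj /lift_inj ->.
have -> : s * m = #|[set: 'I_m * 'I_s]| by rewrite cardsT card_prod !card_ord mulnC.
rewrite -(card_imset _ cross_inj); apply: subset_leq_card; apply/subsetP => _ /imsetP[[j k] _ ->].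
rewrite inE /cross /= !subUset !sub1set !inE lshift_in_core !andbT rshift_notin_core andbT.
apply: mem_edge_set; rewrite /glued_rel glued_col_lshift glued_col_rshift.
by rewrite (inj_eq (@widen_ord_inj _ _ _)) neq_lift !(negbTE (widen_neq_max _)).
Qed.

Lemma card_induced_compl_core_ge :
  #|edge_set [rel x y | c x != c y]| <= #|induced glued (~: core)|.
Proof.
rewrite -(card_imset _ (imset_inj (@rshift_inj s.+2 m))); apply: subset_leq_card.
apply/subsetP => _ /imsetP[_ /imsetP[[j j'] cjj' ->] ->]; rewrite inE /= in cjj'.
rewrite imset_set2 inE mem_edge_set; last first.
  rewrite /glued_rel !glued_col_rshift (inj_eq (@widen_ord_inj _ _ _)) cjj'.
  by rewrite !(negbTE (widen_neq_max _)).
by rewrite subUset !sub1set !inE !rshift_notin_core.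
Qed.

Lemma card_glued_ge :
  'C(s.+2, 2) + s * m + #|edge_set [rel x y | c x != c y]| <= #|glued|.
Proof.
rewrite (card_simple_split core (simple_edge_set glued_rel_irr)).
by rewrite !leq_add ?card_induced_core_ge ?card_crossing_core_ge ?card_induced_compl_core_ge.
Qed.

End GluedGraph.

Theorem theorem1p4 (r n : nat) : 2 <= r -> r <= n ->
  exa 1 n (Kr r) = 'C(r, 2) + (r - 2) * (n - r) + ex (n - r) (Kr r).
Proof.
case: r => [|[|s]] // _ le_rn; rewrite subn2 /=.
apply/eqP; rewrite eqn_leq; apply/andP; split.
  apply/bigmax_leqP => E /andP[Esimple]; rewrite Ncount_Kr => /cards1P[A cliquesE].
  by have := card_unique_clique_le Esimple cliquesE; rewrite card_ord.
have [m ->] : exists m, n = s.+2 + m by exists (n - s.+2); rewrite subnKC.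
rewrite addKn; have [E0 [E0simple E0free <-]] := ex_witness m s.
have [c] := turan_coloring (edge_rel_sym E0) (edge_rel_irr E0) E0free.
rewrite edge_relK // => le_E0.
apply: leq_trans (leq_bigmax_cond (edge_set (glued_rel c)) _).
  by apply: leq_trans (card_glued_ge c); rewrite leq_add2l.
rewrite (simple_edge_set (glued_rel_irr c)) Ncount_Kr.
by rewrite (cliques_edge_set (glued_rel_sym c) (glued_rel_irr c)) cliques_glued cards1.
Qed.
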